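(* In the rationalizable model, consider the following principal algorithm: for each agent $i=1,\dots,n$ and each opponent profile $a_{-i}\in A_{-i}$, the principal runs the single-agent binary-search procedure on agent $i$ (for each $a_i\in A_i$, use $\mathcal{O}(\log(1/\varepsilon))$ binary-search rounds to approximate to precision $\varepsilon$ the smallest $P^*(a_i)\in[0,1]$ such that agent $i$ plays $a_i$ when paid $P^*(a_i)$ on $a_i$ and $0$ on its other actions, and set $\tilde U_i(a_i,a_{-i}):=-P^*(a_i)$), while during these rounds paying every other agent $j\ne i$ according to $P_j^t(a_j')=2\cdot\mathbb{1}[a_j'=a_j]$, where $a_j$ is agent $j$'s action in $a_{-i}$; finally it outputs $\tilde U$. This algorithm $\varepsilon$-learns any game in $\mathcal{O}(nM\log(1/\varepsilon))$ rounds.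
   Context: A normal-form game has agents $i\in[n]$, finite action sets $A_i$ with $|A_i|=m_i\ge2$, $A=A_1\times\dots\times A_n$, $M=\prod_i m_i$, and utilities $U_i:A\to[0,1]$. The game is played over rounds $t=1,2,\dots$: the principal chooses payment functions $P_i^t:A_i\to\mathbb{R}_+$, creating the game $\Gamma^t$ with utilities $U_i^t(a)=U_i(a)+P_i^t(a_i)$; agents simultaneously choose actions $a_i^t$; the principal observes $a^t$. The principal initially knows only the action sets and that utilities lie in $[0,1]$. Rationalizable model: in each round each agent plays an action that survives iterated elimination of strictly dominated actions in $\Gamma^t$ (an action $a_i$ is strictly dominated if some mixed strategy $x_i\in\Delta(A_i)$ satisfies $U_i^t(x_i,a_{-i})>U_i^t(a_i,a_{-i})$ for all $a_{-i}$). The principal $\varepsilon$-learns the game if it outputs $\tilde U_i:A\to\mathbb{R}$ such that there exist $W_i:A_{-i}\to\mathbb{R}$ with $|U_i(a)+W_i(a_{-i})-\tilde U_i(a)|\le\varepsilon$ for all $i$ and $a\in A$. *)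

From HB Require Import structures.
From mathcomp Require Import all_boot all_order all_algebra.
From mathcomp Require Import reals exp.
Unset Printing Implicit Defensive.
Import Order.TTheory GRing.Theory Num.Theory.
Local Open Scope ring_scope.

Section Games.
Variable R : realType.
Variable n : nat.
Variable m : 'I_n -> nat.

Definition profile := {dffun forall i : 'I_n, 'I_(m i)}.

(* (c, a_{-i}) : replace the i-th coordinate of a by c *)
Definition upd (a : profile) (i : 'I_n) (c : 'I_(m i)) : profile :=
  @finfun _ (fun j => 'I_(m j)) (@dfwith _ (fun j => 'I_(m j)) (fun j => a j) i c).

Definition utilities := forall i : 'I_n, profile -> R.
Definition payments := forall i : 'I_n, 'I_(m i) -> R.

Definition with_pay (U : utilities) (P : payments) : utilities :=
  fun i a => U i a + P i (a i).

Definition dominated (G : utilities) (S : forall i : 'I_n, 'I_(m i) -> Prop)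
    (i : 'I_n) (b : 'I_(m i)) : Prop :=
  exists x : 'I_(m i) -> R,
    [/\ (forall c, 0 <= x c), \sum_(c : 'I_(m i)) x c = 1,
        (forall c, ~ S i c -> x c = 0) &
        forall a : profile, (forall j, j != i -> S j (a j)) ->
          G i (upd a i b) < \sum_(c : 'I_(m i)) x c * G i (upd a i c)].

(* surviving actions after k rounds of (simultaneous) iterated elimination of
   strictly dominated actions *)
Fixpoint surv (G : utilities) (k : nat) : forall i : 'I_n, 'I_(m i) -> Prop :=
  match k with
  | 0 => fun _ _ => True
  | k'.+1 => fun i b => surv G k' i b /\ ~ dominated G (surv G k') i b
  end.

Definition rationalizable (G : utilities) (a : profile) : Prop :=
  forall (i : 'I_n) (k : nat), surv G k i (a i).

(* Interactive principal algorithms: in each round the principal posts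
   payments and observes the resulting action profile, or it stops and
   outputs an estimate Ut of the utilities. *)
Inductive principal : Type :=
  | Query of payments & (profile -> principal)
  | Output of utilities.

Definition history := seq (payments * profile).

(* Agent behaviour: (possibly history dependent, adversarial) choice of the
   action profile played in the posted game. *)
Definition behaviour := history -> payments -> profile.

Definition rational_behaviour (U : utilities) (beh : behaviour) : Prop :=
  forall (h : history) (P : payments), rationalizable (with_pay U P) (beh h P).

Fixpoint exec (p : principal) (beh : behaviour) (h : history)
    : nat * utilities :=
  match p with
  | Output Ut => (0%N, Ut)
  | Query P k =>
      let a := beh h P in
      let r := exec (k a) beh (rcons h (P, a)) in (r.1.+1, r.2)
  end.

(* eps-learning: exists W_i depending only on a_{-i} *)
Definition eps_learns (U Ut : utilities) (eps : R) : Prop :=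
  exists W : utilities,
    (forall (i : 'I_n) (a : profile) (c : 'I_(m i)), W i (upd a i c) = W i a) /\
    (forall (i : 'I_n) (a : profile), `|U i a + W i a - Ut i a| <= eps).

Definition utilities_in01 (U : utilities) : Prop :=
  forall i a, 0 <= U i a <= 1.

Definition pay_for (i : 'I_n) (a : profile) (p : R) : payments :=
  fun j b => if b == a j then (if j == i then p else 2) else 0.

(* K rounds of binary search on [lo, hi] for the threshold payment P-star(a_i);
   the continuation receives the final upper end , i.e. the estimate of P-star *)
Fixpoint bsearch (K : nat) (i : 'I_n) (a : profile) (lo hi : R)
    (cont : R -> principal) : principal :=
  match K with
  | 0 => cont hi
  | K'.+1 =>
      let mid := (lo + hi) / 2 in
      Query (pay_for i a mid)
        (fun b => if b i == a i then bsearch K' i a lo mid cont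
                  else bsearch K' i a mid hi cont)
  end.

Definition est_upd (est : utilities) (i : 'I_n) (a : profile) (p : R)
    : utilities :=
  fun j b => if (j == i) && (b == a) then p else est j b.

Fixpoint run_all (K : nat) (l : seq ('I_n * profile)) (est : utilities)
    : principal :=
  match l with
  | [::] => Output (fun j b => - est j b)
  | (i, a) :: l' => bsearch K i a 0 1 (fun p => run_all K l' (est_upd est i a p))
  end.

(* number of binary search rounds: K = floor(log2(1/eps)) + 1, so 2^-K <= eps *)
Definition nsteps (eps : R) : nat := (Num.truncn (ln (eps^-1) / ln 2)).+1.

Definition algorithm (eps : R) : principal :=
  run_all (nsteps eps) [seq (i, a) | i <- enum 'I_n, a <- enum {: profile}]
    (fun _ _ => 0).

End Games.

Arguments utilities_in01 {R n m}.
Arguments rational_behaviour {R n m}.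
Arguments eps_learns {R n m}.
Arguments exec {R n m}.

From HB Require Import structures.
From mathcomp Require Import all_boot all_order all_algebra.
From mathcomp Require Import reals exp.
From mathcomp Require Import ring lra.
Set Implicit Arguments.
Import Order.TTheory GRing.Theory Num.Theory.
Local Open Scope ring_scope.

(** Paying every opponent [j] two units on [a_j] makes [a_j] strictly dominant
   for [j], since utilities lie in [0, 1]; after one round of elimination the
   opponents are pinned to [a_{-i}], so agent [i] best-responds to [a_{-i}].
   Paying [p] on [a_i] then makes [i] play [a_i] only if [p] is at least the
   regret [max_c U_i(c, a_{-i}) - U_i(a)], and another action only if [p] is at
   most the regret, so [K] rounds of binary search on [0, 1] locate the regret
   to within [2^-K].  The negated regret differs from [U_i(a)] by
   [max_c U_i(c, a_{-i})], which depends on [a_{-i}] only. *)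

Section BinarySearchLength.
Variable R : realType.

Lemma ln2_ge_half : 2^-1 <= ln (2 : R).
Proof.
have := @le_ln1Dx R (- 2^-1) ltac:(lra).
have -> : 1 - 2^-1 = (2 : R)^-1 by field.
by rewrite lnV ?posrE //; lra.
Qed.

Lemma nsteps_le (eps : R) :
  0 < eps < 1 -> (nsteps R eps)%:R <= 2 * (1 + ln eps^-1).
Proof.
case/andP=> eps_gt0 eps_lt1.
have L_ge0 : 0 <= ln eps^-1 by rewrite ln_ge0 // invf_ge1 // ltW.
have ln2_ge := ln2_ge_half.
have ln2_gt0 : 0 < ln (2 : R) by lra.
have /andP[trunc_le _] := truncn_itv (divr_ge0 L_ge0 (ltW ln2_gt0)).
have : ln eps^-1 / ln 2 <= 2 * ln eps^-1.
  by rewrite ler_pdivrMr; nra.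
by rewrite /nsteps -addn1 natrD; lra.
Qed.

Lemma nsteps_precision (eps : R) : 0 < eps -> 2 ^- nsteps R eps <= eps.
Proof.
move=> eps_gt0; set K := nsteps R eps.
have ln2_gt0 : 0 < ln (2 : R) by apply: ln_gt0; lra.
have : ln eps^-1 < ln (2 ^+ K).
  by rewrite lnXn // -(mulr_natl (ln 2)) -ltr_pdivrMr // truncnS_gt.
rewrite ltr_ln ?posrE ?invr_gt0 ?exprn_gt0 // => /ltW.
by rewrite -[X in _ <= X]invrK lef_pV2 ?posrE ?invr_gt0 ?exprn_gt0.
Qed.

End BinarySearchLength.

Section Profiles.
Variables (n : nat) (m : 'I_n -> nat).
Local Notation profile := (profile n m).
Local Notation upd := (@upd n m).

Lemma upd_in (a : profile) i c : upd a i c i = c.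
Proof. by rewrite ffunE dfwith_in. Qed.

Lemma upd_out (a : profile) i c j : j != i -> upd a i c j = a j.
Proof. by move=> ji; rewrite ffunE dfwith_out // eq_sym. Qed.

Lemma eq_upd (a a' : profile) i c :
  (forall j, j != i -> a' j = a j) -> upd a' i c = upd a i c.
Proof.
move=> eq_a; apply/ffunP => j; case: (eqVneq j i) => [->|ji].
  by rewrite !upd_in.
by rewrite !upd_out // eq_a.
Qed.

Lemma upd_upd (a : profile) i c d : upd (upd a i c) i d = upd a i d.
Proof. by apply: eq_upd => j ji; rewrite upd_out. Qed.

Lemma upd_id (a : profile) i : upd a i (a i) = a.
Proof.
apply/ffunP => j; case: (eqVneq j i) => [->|ji]; first by rewrite upd_in.
by rewrite upd_out.
Qed.

Lemma card_profile : #|{: profile}| = (\prod_(i < n) m i)%N.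
Proof.
rewrite card_dep_ffun foldrE big_map big_enum /=.
by apply: eq_bigr => i _; rewrite card_ord.
Qed.

End Profiles.

Section Dominance.
Variables (R : realType) (n : nat) (m : 'I_n -> nat).
Local Notation profile := (profile n m).
Local Notation upd := (@upd n m).
Local Notation utilities := (utilities R n m).
Local Notation dominated := (@dominated R n m).
Local Notation surv := (@surv R n m).
Local Notation rationalizable := (@rationalizable R n m).
Local Notation action_sets := (forall i : 'I_n, 'I_(m i) -> Prop).

Definition best_reply (G : utilities) i (a : profile) : 'I_(m i) :=
  [arg max_(c > a i) G i (upd a i c)]%O.

Definition best_payoff (G : utilities) i (a : profile) : R :=
  G i (upd a i (best_reply G i a)).

Lemma best_payoff_ge (G : utilities) i (a : profile) c :
  G i (upd a i c) <= best_payoff G i a.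
Proof.
rewrite /best_payoff /best_reply.
by case: arg_maxP => // b _; apply.
Qed.

Lemma best_payoff_upd (G : utilities) i (a : profile) c :
  best_payoff G i (upd a i c) = best_payoff G i a.
Proof.
apply/le_anti; rewrite {1}/best_payoff upd_upd best_payoff_ge /=.
by rewrite /best_payoff -(upd_upd a i c) best_payoff_ge.
Qed.

Lemma dominated_by_pure (G : utilities) (S : action_sets) i b c :
  S i c ->
  (forall a : profile, (forall j, j != i -> S j (a j)) ->
     G i (upd a i b) < G i (upd a i c)) ->
  dominated G S i b.
Proof.
move=> Sc lt_bc; exists (fun d => (d == c)%:R); split.
- by move=> d; rewrite ler0n.
- by rewrite (bigD1 c) //= eqxx big1 ?addr0 // => d /negbTE ->.
- by move=> d; case: eqP => // ->.
move=> a Sa; rewrite (bigD1 c) //= eqxx mul1r big1 ?addr0; first exact: lt_bc.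
by move=> d /negbTE ->; rewrite mul0r.
Qed.

Lemma best_reply_undominated G (S : action_sets) i (a : profile) b :
  (forall j, j != i -> S j (a j)) ->
  (forall c, G i (upd a i c) <= G i (upd a i b)) ->
  ~ dominated G S i b.
Proof.
move=> Sa b_best [x [x_ge0 x_sum1 _ /(_ a Sa)]]; apply/negP; rewrite -leNgt.
rewrite -[X in _ <= X]mul1r -x_sum1 mulr_suml.
by apply: ler_sum => c _; apply: ler_wpM2l.
Qed.

(* Only two rounds of elimination are needed: the first removes every
   opponent action except [a_j], the second every non-best reply of [i]. *)
Lemma rationalizable_best_reply (G : utilities) i (a b : profile) :
  (forall j, j != i -> forall (a' : profile) d,
     d != a j -> G j (upd a' j d) < G j (upd a' j (a j))) ->
  rationalizable G b -> forall c, G i (upd a i c) <= G i (upd a i (b i)).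
Proof.
move=> a_dominant b_rat c; rewrite leNgt; apply/negP => lt_bc.
have pinned j : j != i -> forall d, surv G 1 j d -> d = a j.
  move=> ji d [_ not_dom]; apply/eqP; apply/negPn/negP => da; apply: not_dom.
  by apply: (@dominated_by_pure _ _ _ d (a j)) => // a' _; exact: a_dominant.
have best_surv : surv G 1 i (best_reply G i a).
  split=> //; apply: (@best_reply_undominated _ _ _ a) => // d.
  exact: best_payoff_ge.
have [_ ] := b_rat i 2%N; apply.
apply: (@dominated_by_pure G _ i (b i) _ best_surv) => a' a'_surv.
have a'_pinned d : upd a' i d = upd a i d.
  by apply: eq_upd => j ji; exact: pinned (a'_surv j ji).
rewrite !a'_pinned; apply: (lt_le_trans lt_bc); exact: best_payoff_ge.
Qed.

End Dominance.

Section BinarySearch.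
Variables (R : realType) (n : nat) (m : 'I_n -> nat).
Local Notation profile := (profile n m).
Local Notation principal := (principal R n m).
Local Notation pay_for := (@pay_for R n m).
Local Notation bsearch := (bsearch R n m).

Context {beh : behaviour R n m} {i : 'I_n} {a : profile} {D : R}.
Hypothesis threshold : forall h p, 0 <= p ->
  if beh h (pay_for i a p) i == a i then D <= p else p <= D.

Lemma bsearch_exec K lo hi (cont : R -> principal) h :
  0 <= lo -> lo <= D -> D <= hi ->
  exists hi' h', D <= hi' <= D + (hi - lo) / 2 ^+ K /\
    exec (bsearch K i a lo hi cont) beh h =
      ((exec (cont hi') beh h').1 + K, (exec (cont hi') beh h').2)%N.
Proof.
elim: K lo hi h => [|K IH] lo hi h lo_ge0 loD Dhi /=.
  exists hi, h; rewrite expr0 divr1 addn0 Dhi /=; split; first lra.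
  by case: exec.
set mid := (lo + hi) / 2.
have mid_ge0 : 0 <= mid by rewrite /mid; lra.
set h_next := rcons h (pay_for i a mid, beh h (pay_for i a mid)).
have halve : (hi - lo) / 2 ^+ K.+1 = (hi - lo) / 2 / 2 ^+ K.
  by rewrite exprS invfM mulrA.
have := threshold h mid mid_ge0; case: ifP => _ Dmid.
- have [hi' [h' [/andP[D_hi' hi'_le] ->]]] := IH lo mid h_next lo_ge0 loD Dmid.
  exists hi', h'; rewrite addnS D_hi' halve; split=> //.
  by have -> : (hi - lo) / 2 = mid - lo by rewrite /mid; field.
- have [hi' [h' [/andP[D_hi' hi'_le] ->]]] := IH mid hi h_next mid_ge0 Dmid Dhi.
  exists hi', h'; rewrite addnS D_hi' halve; split=> //.
  by have -> : (hi - lo) / 2 = hi - mid by rewrite /mid; field.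
Qed.

End BinarySearch.

Section Learning.
Variables (R : realType) (n : nat) (m : 'I_n -> nat).
Local Notation profile := (profile n m).
Local Notation upd := (@upd n m).
Local Notation utilities := (utilities R n m).
Local Notation with_pay := (@with_pay R n m).
Local Notation pay_for := (@pay_for R n m).

Variable U : utilities.
Hypothesis U01 : utilities_in01 U.

Definition regret i (a : profile) : R := best_payoff U i a - U i a.

Lemma regret_ge0 i a : 0 <= regret i a.
Proof. by rewrite subr_ge0 -{1}(upd_id a i) best_payoff_ge. Qed.

Lemma regret_le1 i a : regret i a <= 1.
Proof.
have /andP[_ best_le1] := U01 i (upd a i (best_reply U i a)).
by have /andP[U_ge0 _] := U01 i a; rewrite /regret /best_payoff; lra.
Qed.

Lemma pay_for_dominant i (a : profile) p j : j != i ->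
  forall (a' : profile) d, d != a j ->
  with_pay U (pay_for i a p) j (upd a' j d) <
    with_pay U (pay_for i a p) j (upd a' j (a j)).
Proof.
move=> ji a' d da.
rewrite /with_pay /pay_for !upd_in eqxx (negbTE da) (negbTE ji).
have /andP[_ Ud_le1] := U01 j (upd a' j d).
by have /andP[Ua_ge0 _] := U01 j (upd a' j (a j)); lra.
Qed.

Lemma eps_learns_of_regret (Ut : utilities) eps :
  (forall i a, `|Ut i a + regret i a| <= eps) -> eps_learns U Ut eps.
Proof.
move=> Ut_close; exists (fun i a => - best_payoff U i a); split.
  by move=> i a c; rewrite best_payoff_upd.
move=> i a; rewrite -normrN.
by have -> : - (U i a - best_payoff U i a - Ut i a) = Ut i a + regret i a
  by rewrite /regret; ring.
Qed.

Variable beh : behaviour R n m.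
Hypothesis beh_rat : rational_behaviour U beh.

Lemma regret_threshold i a h p : 0 <= p ->
  if beh h (pay_for i a p) i == a i then regret i a <= p else p <= regret i a.
Proof.
move=> p_ge0; set b := beh h _.
have b_best :=
  rationalizable_best_reply i a (@pay_for_dominant i a p) (beh_rat h _).
rewrite -/b /with_pay /pay_for upd_in eqxx in b_best.
case: eqP => [b_ai | /eqP b_ai].
- have := b_best (best_reply U i a).
  rewrite /regret /best_payoff !upd_in b_ai upd_id eqxx.
  by case: eqP => [->|_]; rewrite ?upd_id; lra.
- have := b_best (a i); rewrite !upd_in upd_id eqxx (negbTE b_ai).
  by have := best_payoff_ge U i a (b i); rewrite /regret; lra.
Qed.

Lemma run_all_exec eps K : 2 ^- K <= eps ->
  forall l est h,
  (forall j b, (j, b) \notin l -> `|est j b - regret j b| <= eps) ->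
  (exec (run_all R n m K l est) beh h).1 = (size l * K)%N /\
  forall j b, `|(exec (run_all R n m K l est) beh h).2 j b + regret j b| <= eps.
Proof.
move=> K_prec; elim=> [|[i a] l IH] est h est_close /=.
  by split=> // j b; rewrite -normrN opprD opprK; exact: est_close.
have [hi' [h' [/andP[regret_hi' hi'_le] ->]]] :=
  bsearch_exec (regret_threshold i a) K 0 1
    (fun p => run_all R n m K l (est_upd R n m est i a p)) h
    (lexx 0) (regret_ge0 i a) (regret_le1 i a).
have est_close' j b : (j, b) \notin l ->
    `|est_upd R n m est i a hi' j b - regret j b| <= eps.
  move=> jb_l; rewrite /est_upd; case: ifP => [/andP[/eqP-> /eqP->] | jb_ia].
    by rewrite ger0_norm ?subr_ge0 //; move: hi'_le; rewrite subr0 div1r; lra.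
  by apply: est_close; rewrite in_cons xpair_eqE jb_ia.
have [rounds learns] := IH _ h' est_close'.
by rewrite rounds mulSn addnC.
Qed.

End Learning.

Theorem theorem4p2 (R : realType) :
  exists C : R, 0 < C /\
  forall (n : nat) (m : 'I_n -> nat), (forall i, 2 <= m i)%N ->
  forall eps : R, 0 < eps < 1 ->
  forall (U : utilities R n m), utilities_in01 U ->
  forall beh : behaviour R n m, rational_behaviour U beh ->
  let res := exec (algorithm R n m eps) beh [::] in
  eps_learns U res.2 eps /\
  (res.1)%:R <= C * n%:R * (\prod_(i < n) m i)%:R * (1 + ln (eps^-1)).
Proof.
exists 2; split=> // n m _ eps eps01 U U01 beh beh_rat res.
have /andP[eps_gt0 _] := eps01.
set l := [seq (i, a) | i <- enum 'I_n, a <- enum {: profile n m}].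
have l_all j b : (j, b) \notin l -> `|0 - regret U j b| <= eps.
  by rewrite allpairs_f ?mem_enum.
have [rounds learns] :=
  run_all_exec U01 beh_rat _ _ (nsteps_precision R eps eps_gt0) l _ [::] l_all.
split; first by apply: eps_learns_of_regret; exact: learns.
rewrite /res rounds size_allpairs size_enum_ord -cardE card_profile !natrM.
set NM := n%:R * (\prod_(i < n) m i)%:R.
have -> : 2 * n%:R * (\prod_(i < n) m i)%:R * (1 + ln eps^-1) =
          NM * (2 * (1 + ln eps^-1)) by rewrite /NM; ring.
by rewrite ler_wpM2l ?mulr_ge0 ?nsteps_le.
Qed.
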